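(* A finite group $G$ is completely $M$-realisable if and only if $G$ is abelian.
   Context: All groups are finite. For a finite group $H$ and $K\leq H$, the Chermak-Delgado measure is $m_H(K)=|K||C_H(K)|$; let $m^*(H)=\max\{m_H(K)\mid K\leq H\}$ and $\mathcal{CD}(H)=\{K\leq H\mid m_H(K)=m^*(H)\}$, which is a sublattice of the subgroup lattice of $H$; its minimal member $M(H)$ is the Chermak-Delgado subgroup of $H$. A finite group $G$ is completely $M$-realisable if there is a finite group $H$ such that: (i) $G\cong M(H)$; (ii) for every subgroup $G_1\leq G$ there exists $H_1\leq H$ with $G_1\cong M(H_1)$; (iii) for every $H_1\leq H$ there exists $G_1\leq G$ with $M(H_1)\cong G_1$. *)

From mathcomp Require Import all_boot all_fingroup.
Set Implicit Arguments. Unset Strict Implicit. Unset Printing Implicit Defensive.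
Local Open Scope group_scope.

Definition cd_measure (gT : finGroupType) (H K : {set gT}) : nat :=
  (#|K| * #|'C_H(K)|)%N.

Definition cd_max (gT : finGroupType) (H : {set gT}) : nat :=
  \max_(K : {group gT} | K \subset H) cd_measure H K.

Definition in_CD (gT : finGroupType) (H : {set gT}) (K : {group gT}) : bool :=
  (K \subset H) && (cd_measure H K == cd_max H).

Definition is_CD_subgroup (gT : finGroupType) (H : {set gT}) (K : {group gT})
  : Prop :=
  in_CD H K /\ forall L : {group gT}, in_CD H L -> K \subset L.

Definition completely_M_realisable (gT : finGroupType) (G : {group gT}) : Prop :=
  exists (hT : finGroupType) (H : {group hT}),
    [/\ (exists K : {group hT}, is_CD_subgroup H K /\ G \isog K),
        (forall G1 : {group gT}, G1 \subset G ->
           exists H1 : {group hT}, H1 \subset H /\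
             exists K : {group hT}, is_CD_subgroup H1 K /\ G1 \isog K)
      & (forall H1 : {group hT}, H1 \subset H ->
           exists K : {group hT}, is_CD_subgroup H1 K /\
             exists G1 : {group gT}, G1 \subset G /\ K \isog G1)].

From mathcomp Require Import all_boot all_fingroup.
Set Implicit Arguments. Unset Strict Implicit. Unset Printing Implicit Defensive.
Local Open Scope group_scope.

(* Since K <= C_H(C_H(K)), the measure of C_H(K) dominates that of K, so
   CD(H) is closed under taking centralisers in H; the least member M(H) is
   therefore contained in C_H(M(H)), i.e. it is abelian.  Conversely, in an
   abelian group A every subgroup K has m_A(K) = |K||A|, so CD(A) = {A} and
   M(A) = A; taking H = G then realises G and all its subgroups. *)

Lemma leq_cd_max (gT : finGroupType) (H K : {group gT}) :
  K \subset H -> cd_measure H K <= cd_max H.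
Proof. by move=> sKH; apply: (leq_bigmax_cond K sKH). Qed.

Lemma cd_measure_cent (gT : finGroupType) (H K : {group gT}) :
  K \subset H -> cd_measure H K <= cd_measure H 'C_H(K).
Proof.
move=> sKH; rewrite /cd_measure mulnC leq_mul // subset_leq_card //.
by rewrite subsetI sKH centsC subsetIr.
Qed.

Lemma in_CD_cent (gT : finGroupType) (H K : {group gT}) :
  in_CD H K -> in_CD H 'C_H(K)%G.
Proof.
case/andP=> sKH /eqP mK; have sCH : 'C_H(K) \subset H := subsetIl _ _.
rewrite /in_CD sCH eqn_leq leq_cd_max //= -mK.
exact: cd_measure_cent.
Qed.

Lemma CD_subgroup_abelian (gT : finGroupType) (H K : {group gT}) :
  is_CD_subgroup H K -> abelian K.
Proof.
by case=> CD_K minK; have /subsetIP[] := minK _ (in_CD_cent CD_K).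
Qed.

Section AbelianCD.

Variables (gT : finGroupType) (A : {group gT}).
Hypothesis abA : abelian A.

Lemma abelian_cd_measure (K : {group gT}) :
  K \subset A -> cd_measure A K = (#|K| * #|A|)%N.
Proof.
move=> sKA; rewrite /cd_measure; suff ->: 'C_A(K) = A by [].
by apply/setIidPl; rewrite centsC (subset_trans sKA abA).
Qed.

Lemma abelian_cd_max : cd_max A = (#|A| * #|A|)%N.
Proof.
apply/eqP; rewrite eqn_leq -[in X in _ && X](abelian_cd_measure (subxx A)).
rewrite leq_cd_max // andbT; apply/bigmax_leqP=> K sKA.
by rewrite abelian_cd_measure // leq_mul // subset_leq_card.
Qed.

Lemma abelian_is_CD_subgroup : is_CD_subgroup A A.
Proof.
have CD_A : in_CD A A.
  by rewrite /in_CD subxx /= abelian_cd_measure // abelian_cd_max.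
split=> // L /andP[sLA]; rewrite abelian_cd_measure // abelian_cd_max.
rewrite eqn_pmul2r ?cardG_gt0 // => /eqP eqLA.
by rewrite -(geq_leqif (subset_leqif_card sLA)) eqLA.
Qed.

End AbelianCD.

Theorem mainTheorem2 (gT : finGroupType) (G : {group gT}) :
  completely_M_realisable G <-> abelian G.
Proof.
split.
  case=> hT [H [[K [CD_K isoGK]] _ _]].
  by rewrite (isog_abelian isoGK) (CD_subgroup_abelian CD_K).
move=> abG; have selfCD (X : {group gT}) : X \subset G -> is_CD_subgroup X X.
  by move=> sXG; apply/abelian_is_CD_subgroup/(abelianS sXG).
exists gT, G; split.
- by exists G; split; [apply: selfCD | apply: isog_refl].
- move=> G1 sG1G; exists G1; split=> //.
  by exists G1; split; [apply: selfCD | apply: isog_refl].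
- move=> H1 sH1G; exists H1; split; first exact: selfCD.
  by exists H1; rewrite isog_refl.
Qed.
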